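(* Every sawed tree $F$ of height $n$ validates $\mathbf{PL}_n$.
   Context: A finite tree is a finite rooted poset in which each $\downarrow x$ is a chain; $\mathrm{Top}(T)$ is its set of maximal elements. Let $T$ be a finite tree of height $>0$ all of whose top elements have the same height, with a plane ordering $\prec$ of $\mathrm{Top}(T)$ (a linear order such that each $\uparrow x\cap\mathrm{Top}(T)$ is a $\prec$-interval); enumerate $\mathrm{Top}(T)=\{t_1\prec\cdots\prec t_k\}$. The sawed tree based on $(T,\prec)$ is $T$ together with new elements $s_1,\dots,s_{k-1}$ with $t_i<s_i$ and $t_{i+1}<s_i$ (closed under transitivity). The height of a poset is the maximum of $|C|-1$ over chains $C$. For a finite rooted poset $Q$, $\chi(Q)$ is its Jankov–Fine formula: a frame validates $\chi(Q)$ iff it has no surjective p-morphism (map with $f(\uparrow x)=\uparrow f(x)$) from an upset of it onto $Q$. $\mathbf{BD}_n$ is the logic of all finite frames of height at most $n$. The 3-fork is $\{r,a,b,c\}$ with $r<a,r<b,r<c$ only; the Scott frame is $\{r,u_1,u_2,v\}$ with $r<u_1<u_2$, $r<v$ (and $r<u_2$) only. $\mathbf{PL}_n$ is the smallest intermediate logic containing $\mathbf{BD}_n$, $\chi(\text{3-fork})$ and $\chi(\text{Scott frame})$. *)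

From mathcomp Require Import all_boot.
Set Implicit Arguments. Unset Strict Implicit. Unset Printing Implicit Defensive.

Inductive form : Type :=
| Var : nat -> form
| Bot : form
| And : form -> form -> form
| Or  : form -> form -> form
| Imp : form -> form -> form.

Fixpoint subst (s : nat -> form) (f : form) : form :=
  match f with
  | Var p => s p
  | Bot => Bot
  | And a b => And (subst s a) (subst s b)
  | Or a b => Or (subst s a) (subst s b)
  | Imp a b => Imp (subst s a) (subst s b)
  end.

Definition porder (T : finType) (R : rel T) : Prop :=
  [/\ reflexive R, antisymmetric R & transitive R].

Fixpoint forces (T : finType) (R : rel T) (V : nat -> T -> bool) (x : T) (f : form) : Prop :=
  match f with
  | Var p => V p x
  | Bot => False
  | And a b => forces R V x a /\ forces R V x b
  | Or a b => forces R V x a \/ forces R V x b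
  | Imp a b => forall y, R x y -> forces R V y a -> forces R V y b
  end.

Definition upval (T : finType) (R : rel T) (V : nat -> T -> bool) : Prop :=
  forall p x y, R x y -> V p x -> V p y.

Definition valid (T : finType) (R : rel T) (f : form) : Prop :=
  forall V, upval R V -> forall x, forces R V x f.

Definition chain (T : finType) (R : rel T) (C : {set T}) : bool :=
  [forall x in C, forall y in C, R x y || R y x].

Definition height (T : finType) (R : rel T) : nat :=
  \max_(C : {set T} | chain R C) (#|C|.-1).

Definition BD (n : nat) (f : form) : Prop :=
  forall (T : finType) (R : rel T), porder R -> height R <= n -> valid R f.

Definition upset (T : finType) (R : rel T) (U : {set T}) : Prop :=
  forall x y, R x y -> x \in U -> y \in U.

Definition surj_pmorph_from_upset (T Q : finType) (R : rel T) (RQ : rel Q)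
    (U : {set T}) (f : T -> Q) : Prop :=
  [/\ upset R U,
      (forall x y, x \in U -> R x y -> RQ (f x) (f y)),
      (forall x q, x \in U -> RQ (f x) q -> exists2 y, R x y & f y = q) &
      (forall q, exists2 x, x \in U & f x = q)].

(** [jankov RQ chi] : chi has the defining property of the Jankov–Fine
    formula of the finite rooted poset (Q,RQ): a finite frame validates chi
    iff there is no surjective p-morphism from an upset of it onto Q. *)
Definition jankov (Q : finType) (RQ : rel Q) (chi : form) : Prop :=
  forall (T : finType) (R : rel T), porder R ->
    (valid R chi <->
     ~ exists (U : {set T}) (f : T -> Q), surj_pmorph_from_upset R RQ U f).

(** The 3-fork {r,a,b,c}: None is the root r. *)
Definition fork_rel : rel (option 'I_3) := fun x y => (x == y) || (x == None).

(** The Scott frame {r,u1,u2,v} encoded as 0,1,2,3 in 'I_4. *)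
Definition scott_rel : rel 'I_4 := fun x y =>
  (x == y) || (nat_of_ord x == 0) || ((nat_of_ord x == 1) && (nat_of_ord y == 2)).

Inductive PL (n : nat) (cf cs : form) : form -> Prop :=
| PL_K a b : PL n cf cs (Imp a (Imp b a))
| PL_S a b c : PL n cf cs (Imp (Imp a (Imp b c)) (Imp (Imp a b) (Imp a c)))
| PL_andE1 a b : PL n cf cs (Imp (And a b) a)
| PL_andE2 a b : PL n cf cs (Imp (And a b) b)
| PL_andI a b : PL n cf cs (Imp a (Imp b (And a b)))
| PL_orI1 a b : PL n cf cs (Imp a (Or a b))
| PL_orI2 a b : PL n cf cs (Imp b (Or a b))
| PL_orE a b c : PL n cf cs (Imp (Imp a c) (Imp (Imp b c) (Imp (Or a b) c)))
| PL_botE a : PL n cf cs (Imp Bot a)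
| PL_BD a : BD n a -> PL n cf cs a
| PL_fork : PL n cf cs cf
| PL_scott : PL n cf cs cs
| PL_MP a b : PL n cf cs (Imp a b) -> PL n cf cs a -> PL n cf cs b
| PL_subst s a : PL n cf cs a -> PL n cf cs (subst s a).

Definition maximal (T : finType) (R : rel T) (x : T) : bool :=
  [forall y, R x y ==> (y == x)].

Definition is_tree (T : finType) (R : rel T) : Prop :=
  [/\ porder R, (exists r, forall x, R r x) &
      (forall x y z, R y x -> R z x -> R y z || R z y)].

(** [t] enumerates Top(T) as t_1 < ... < t_k along a plane ordering:
    each up-set of a point meets Top(T) in an interval. *)
Definition plane_order (T : finType) (R : rel T) (t : seq T) : Prop :=
  [/\ uniq t, (forall x, (x \in t) = maximal R x) &
      (forall x i j l, i <= j -> j <= l -> l < size t ->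
         R x (nth x t i) -> R x (nth x t l) -> R x (nth x t j))].

(** The sawed tree: T plus saws s_i (i < k-1) with t_i < s_i, t_{i+1} < s_i *)
Definition sawed_type (T : finType) (t : seq T) : finType :=
  (T + 'I_(size t).-1)%type.

Definition sawed_rel (T : finType) (R : rel T) (t : seq T) : rel (sawed_type t) :=
  fun a b =>
    match a, b with
    | inl x, inl y => R x y
    | inl x, inr i => R x (nth x t i) || R x (nth x t i.+1)
    | inr i, inr j => i == j
    | inr _, inl _ => false
    end.

Arguments sawed_rel {T} R t : rename.

From mathcomp Require Import all_boot.
From mathcomp Require Import zify.
From Stdlib Require Import ClassicalEpsilon.
Set Implicit Arguments. Unset Strict Implicit. Unset Printing Implicit Defensive.

(* On any finite poset validity is preserved by these rules
   (Section "Soundness"), and F validates BD_(height F) trivially, so it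
   remains to show that F admits no surjective p-morphism from an upset onto
   the 3-fork or the Scott frame.
   Both targets Q have a root r0 with three distinct proper successors, two
   distinct maximal points, and the property that a non-root point sees at
   most one maximal point.  Against such a Q (Section "NoPmorphism"): the
   root is hit by a tree point x0; the image of any top t_j above x0 is not
   the root (t_j has only two proper successors, the saws s_(j-1), s_j);
   hence adjacent tops t_j, t_(j+1), which share the maximal saw s_j, see the
   same maximal point of Q; the tops above x0 form an interval, so all of
   them see the same maximal point, and every maximal point of Q is seen
   from one of them -- contradicting the two distinct maxima. *)

(* Truth of a proposition as a boolean, used to turn forcing into a valuation. *)
Definition truth (P : Prop) : bool :=
  if excluded_middle_informative P then true else false.

Lemma truthP (P : Prop) : truth P <-> P.
Proof. by rewrite /truth; case: excluded_middle_informative. Qed.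

Section Soundness.

Variables (T : finType) (R : rel T).
Hypothesis R_porder : porder R.

Let R_refl : reflexive R. Proof. by case: R_porder. Qed.
Let R_trans : transitive R. Proof. by case: R_porder. Qed.

Lemma forces_up V : upval R V ->
  forall f x y, R x y -> forces R V x f -> forces R V y f.
Proof.
move=> upV; elim=> [p||a IHa b IHb|a IHa b IHb|a IHa b IHb] x y xy /=.
- exact: upV.
- by [].
- by case=> ??; split; [apply: IHa xy _ | apply: IHb xy _].
- by case=> ?; [left; apply: IHa xy _ | right; apply: IHb xy _].
- by move=> h z yz; apply: h; apply: R_trans xy yz.
Qed.

Lemma forces_subst V s a x :
  forces R (fun p y => truth (forces R V y (s p))) x a <->
  forces R V x (subst s a).
Proof.
elim: a x => [p||a IHa b IHb|a IHa b IHb|a IHa b IHb] x /=.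
- exact: truthP.
- by [].
- by rewrite IHa IHb.
- by rewrite IHa IHb.
- by split=> h y xy /IHa/(h y xy)/IHb.
Qed.

Lemma valid_subst s a : valid R a -> valid R (subst s a).
Proof.
move=> va V upV x; apply/forces_subst; apply: va.
by move=> p y z yz /truthP h; apply/truthP; apply: forces_up yz h.
Qed.

Lemma PL_sound n cf cs : height R <= n -> valid R cf -> valid R cs ->
  forall phi, PL n cf cs phi -> valid R phi.
Proof.
move=> hn vf vs phi; elim=> {phi} /=.
- by move=> a b V upV x y _ ha z yz _; apply: forces_up yz ha.
- move=> a b c V upV x y _ h1 z yz h2 w zw h3.
  by apply: (h1 w (R_trans yz zw) h3 w (R_refl w)); apply: h2 w zw h3.
- by move=> a b V upV x y _ [].
- by move=> a b V upV x y _ [].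
- by move=> a b V upV x y _ ha z yz hb; split=> //; apply: forces_up yz ha.
- by move=> a b V upV x y _ ha; left.
- by move=> a b V upV x y _ ha; right.
- move=> a b c V upV x y _ h1 z yz h2 w zw [].
  + by apply: h1; apply: R_trans yz zw.
  + by apply: h2.
- by move=> a V upV x y _ [].
- by move=> a bd; apply: bd R_porder hn.
- exact: vf.
- exact: vs.
- by move=> a b _ hab _ ha V upV x; apply: (hab V upV x x (R_refl x)); apply: ha.
- by move=> s a _; apply: valid_subst.
Qed.

(* In a finite poset every point lies below a maximal point: take a successor
   of x with the largest down-set. *)
Lemma exists_maximal x : exists2 y, R x y & maximal R y.
Proof.
have [_ anti _] := R_porder.
pose down y := [set z | R z y].
case: (@arg_maxnP _ x (R x) (fun y => #|down y|) (R_refl x)) => y xy ymax.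
exists y => //; apply/forallP=> z; apply/implyP=> yz.
have sub : down y \subset down z.
  by apply/subsetP=> w; rewrite !inE => wy; apply: R_trans wy yz.
have /eqP eq_down : down y == down z by rewrite eqEcard sub; apply: ymax; apply: R_trans xy yz.
have : z \in down y by rewrite eq_down inE R_refl.
by rewrite inE => zy; apply/eqP; apply: anti; rewrite zy yz.
Qed.

End Soundness.

Section SawedFrame.

Variables (T : finType) (R : rel T) (t : seq T).
Hypothesis R_porder : porder R.

Local Notation Fr := (sawed_rel R t).

Lemma saw_lt_size (i : 'I_(size t).-1) : i < size t.
Proof. by have := ltn_ord i; lia. Qed.

Lemma saw_succ_lt_size (i : 'I_(size t).-1) : i.+1 < size t.
Proof. by have := ltn_ord i; lia. Qed.

(* A point x lies below the saw s_i iff it lies below t_i or t_(i+1); the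
   default element of [nth] is irrelevant. *)
Lemma sawed_rel_saw (d x : T) (i : 'I_(size t).-1) :
  Fr (inl x) (inr i) = R x (nth d t i) || R x (nth d t i.+1).
Proof.
by rewrite /= !(set_nth_default d x) ?saw_lt_size ?saw_succ_lt_size.
Qed.

Lemma sawed_porder : porder Fr.
Proof.
have [refl anti trans] := R_porder; split.
- by case=> [x|i] /=; rewrite ?refl ?eqxx.
- case=> [x|i] [y|j] /=; rewrite ?andbF //.
  + by move=> h; congr inl; apply: anti.
  + by case/andP=> /eqP->.
- case=> [y|i] [x|j] [z|k] //.
  + exact: trans.
  + move=> xy; rewrite !(sawed_rel_saw y) => /orP[] h.
    * by rewrite (trans _ _ _ xy h).
    * by rewrite (trans _ _ _ xy h) orbT.
  + by move=> h /eqP<-.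
  + by move=> /eqP->.
Qed.

Lemma saw_maximal (i : 'I_(size t).-1) : maximal Fr (inr i).
Proof. by apply/forallP=> -[y|j] //=; apply/implyP=> /eqP->. Qed.

Hypothesis t_uniq : uniq t.
Hypothesis t_tops : forall x, (x \in t) = maximal R x.

Lemma above_top d j y : j < size t -> Fr (inl (nth d t j)) y ->
  y = inl (nth d t j) \/ exists2 i : 'I_(size t).-1, y = inr i & (i == j :> nat) || (i.+1 == j).
Proof.
move=> jt; have tj_max : maximal R (nth d t j) by rewrite -t_tops mem_nth.
have top_eq k : k < size t -> R (nth d t j) (nth d t k) -> k = j.
  by move=> kt /(implyP (forallP tj_max _)); rewrite nth_uniq // => /eqP.
case: y => [y|i] hy; [left | right; exists i => //].
  by rewrite (eqP (implyP (forallP tj_max y) hy)).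
move: hy; rewrite (sawed_rel_saw d) => /orP[] /top_eq ->;
  by rewrite ?saw_lt_size ?saw_succ_lt_size ?eqxx ?orbT.
Qed.

End SawedFrame.

Lemma two_slots a b c j :
  (a == j) || (a.+1 == j) -> (b == j) || (b.+1 == j) -> (c == j) || (c.+1 == j) ->
  [\/ a = b, a = c | b = c].
Proof.
case/orP=> /eqP ha; case/orP=> /eqP hb; case/orP=> /eqP hc;
  by [constructor 1; lia | constructor 2; lia | constructor 3; lia].
Qed.

Section NoPmorphism.

Variables (Q : finType) (RQ : rel Q) (r0 q1 q2 q3 : Q).
Hypothesis RQ_refl : reflexive RQ.
Hypotheses (q1_r0 : q1 != r0) (q2_r0 : q2 != r0) (q3_r0 : q3 != r0).
Hypotheses (q1_q2 : q1 != q2) (q1_q3 : q1 != q3) (q2_q3 : q2 != q3).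
Hypotheses (r0_q1 : RQ r0 q1) (r0_q2 : RQ r0 q2) (r0_q3 : RQ r0 q3).
Hypothesis unique_max_above : forall q p p', q != r0 ->
  maximal RQ p -> maximal RQ p' -> RQ q p -> RQ q p' -> p = p'.

Section Morphism.

Variables (T : finType) (R : rel T) (t : seq T).
Hypotheses (R_porder : porder R) (t_plane : plane_order R t).

Local Notation Fr := (sawed_rel R t).

Variables (U : {set sawed_type t}) (f : sawed_type t -> Q).
Hypothesis U_upset : upset Fr U.
Hypothesis f_mono : forall x y, x \in U -> Fr x y -> RQ (f x) (f y).
Hypothesis f_back : forall x q, x \in U -> RQ (f x) q -> exists2 y, Fr x y & f y = q.
Hypothesis f_onto : forall q, exists2 x, x \in U & f x = q.

Lemma pmorph_maximal z : z \in U -> maximal Fr z -> maximal RQ (f z).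
Proof.
move=> zU z_max; apply/forallP=> q; apply/implyP=> /(f_back zU) [y zy <-].
by rewrite (eqP (implyP (forallP z_max y) zy)).
Qed.

(* A top of the frame is not mapped to the root: the root has three distinct
   proper successors, while a top has only two. *)
Lemma top_not_root d j : j < size t -> inl (nth d t j) \in U ->
  f (inl (nth d t j)) != r0.
Proof.
have [t_uniq t_tops _] := t_plane.
move=> jt tjU; apply/eqP=> f_tj.
have saw_onto q : q != r0 -> RQ r0 q ->
    exists2 i : 'I_(size t).-1, f (inr i) = q & (i == j :> nat) || (i.+1 == j).
  move=> q_r0; rewrite -f_tj => /(f_back tjU) [y /(above_top t_uniq t_tops jt)].
  case=> [->|[i -> ij]] fy; first by rewrite -fy f_tj eqxx in q_r0.
  by exists i.
have [i1 f1 j1] := saw_onto _ q1_r0 r0_q1.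
have [i2 f2 j2] := saw_onto _ q2_r0 r0_q2.
have [i3 f3 j3] := saw_onto _ q3_r0 r0_q3.
case: (two_slots j1 j2 j3) => /val_inj e.
- by move: q1_q2; rewrite -f1 -f2 e eqxx.
- by move: q1_q3; rewrite -f1 -f3 e eqxx.
- by move: q2_q3; rewrite -f2 -f3 e eqxx.
Qed.

(* The root of Q is the image of a point of the underlying poset, since saws
   are maximal while r0 is not. *)
Lemma root_preimage : exists2 x0, inl x0 \in U & f (inl x0) = r0.
Proof.
have [[x0|i] iU fi] := f_onto r0; first by exists x0.
have [y iy fy] := f_back iU (etrans (congr1 (RQ^~ q1) fi) r0_q1).
move: fy; rewrite (eqP (implyP (forallP (saw_maximal R i) y) iy)) fi => r0_eq.
by move: q1_r0; rewrite r0_eq eqxx.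
Qed.

Section AboveRootPreimage.

Variable x0 : T.
Hypothesis x0U : inl x0 \in U.

Lemma top_colour y : Fr (inl x0) y -> maximal RQ (f y) ->
  exists2 j, j < size t & R x0 (nth x0 t j) && RQ (f (inl (nth x0 t j))) (f y).
Proof.
have [_ t_tops _] := t_plane; have [R_refl _ R_trans] := R_porder.
case: y => [y|i] hy fy_max.
  have [z yz z_max] := exists_maximal R_porder y.
  have zt : z \in t by rewrite t_tops.
  exists (index z t); first by rewrite index_mem.
  rewrite nth_index // (R_trans _ _ _ hy yz) /=.
  have /(implyP (forallP fy_max _)) /eqP -> :=
    f_mono (U_upset hy x0U) (yz : Fr (inl y) (inl z)).
  exact: RQ_refl.
move: (hy); rewrite (sawed_rel_saw R x0) => /orP[] h;
  [exists i; first exact: saw_lt_size | exists i.+1; first exact: saw_succ_lt_size];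
  rewrite h /=; apply: f_mono (U_upset (h : Fr (inl x0) (inl _)) x0U) _;
  by rewrite (sawed_rel_saw R x0) R_refl ?orbT.
Qed.

(* Adjacent tops above x0 share the saw between them, so their images see
   the same maximal point. *)
Lemma adjacent_tops j p : j.+1 < size t ->
  R x0 (nth x0 t j) -> R x0 (nth x0 t j.+1) ->
  maximal RQ p -> RQ (f (inl (nth x0 t j))) p -> RQ (f (inl (nth x0 t j.+1))) p.
Proof.
have [R_refl _ _] := R_porder.
move=> jt rj rj1 p_max fj_p.
have js : j < (size t).-1 by case: (size t) jt.
pose s := Ordinal js.
have tjU : inl (nth x0 t j) \in U by apply: U_upset x0U.
have tj1U : inl (nth x0 t j.+1) \in U by apply: U_upset x0U.
have sU : inr s \in U by apply: U_upset x0U; rewrite (sawed_rel_saw R x0) rj.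
have fs_max := pmorph_maximal sU (saw_maximal R s).
have fj_s : RQ (f (inl (nth x0 t j))) (f (inr s)).
  by apply: f_mono tjU _; rewrite (sawed_rel_saw R x0) R_refl.
rewrite (unique_max_above (top_not_root (ltnW jt) tjU) p_max fs_max fj_p fj_s).
by apply: f_mono tj1U _; rewrite (sawed_rel_saw R x0) R_refl orbT.
Qed.

(* The tops above x0 form an interval, hence all of their images see one and
   the same maximal point. *)
Lemma tops_same_max j l p p' : j <= l < size t ->
  R x0 (nth x0 t j) -> R x0 (nth x0 t l) ->
  maximal RQ p -> maximal RQ p' ->
  RQ (f (inl (nth x0 t j))) p -> RQ (f (inl (nth x0 t l))) p' -> p = p'.
Proof.
have [_ _ t_interval] := t_plane.
move=> /andP[jl]; rewrite -(subnKC jl); move: (l - j) => d {jl l}.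
elim: d j p => [|d IH] j p jdt rj rjd p_max p'_max fj_p fjd_p'.
  rewrite addn0 in jdt rjd fjd_p'.
  apply: unique_max_above p_max p'_max fj_p fjd_p'.
  by apply: top_not_root jdt _; apply: U_upset x0U.
rewrite -addSnnS in jdt rjd fjd_p'.
have rj1 : R x0 (nth x0 t j.+1) by apply: t_interval rj rjd; rewrite ?leq_addr.
have j1t : j.+1 < size t := leq_ltn_trans (leq_addr d j.+1) jdt.
have fj1_p := adjacent_tops j1t rj rj1 p_max fj_p.
exact: (IH j.+1 p) jdt rj1 rjd p_max p'_max fj1_p fjd_p'.
Qed.

End AboveRootPreimage.

Lemma maxima_above_root m1 m2 : maximal RQ m1 -> maximal RQ m2 ->
  RQ r0 m1 -> RQ r0 m2 -> m1 = m2.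
Proof.
move=> m1_max m2_max r0_m1 r0_m2.
have [x0 x0U fx0] := root_preimage.
have colour m : maximal RQ m -> RQ r0 m -> exists2 j, j < size t &
    R x0 (nth x0 t j) && RQ (f (inl (nth x0 t j))) m.
  move=> m_max; rewrite -fx0 => /(f_back x0U) [y x0y fy].
  by rewrite -fy in m_max *; exact: (top_colour x0U x0y m_max).
have [j1 j1t /andP[r1 c1]] := colour m1 m1_max r0_m1.
have [j2 j2t /andP[r2 c2]] := colour m2 m2_max r0_m2.
case: (leqP j1 j2) => j12.
  by apply: (tops_same_max x0U _ r1 r2 m1_max m2_max c1 c2); rewrite j12.
by symmetry; apply: (tops_same_max x0U _ r2 r1 m2_max m1_max c2 c1); rewrite ltnW.
Qed.

End Morphism.

Lemma no_sawed_pmorph m1 m2 : maximal RQ m1 -> maximal RQ m2 -> m1 != m2 ->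
  RQ r0 m1 -> RQ r0 m2 ->
  forall (T : finType) (R : rel T) (t : seq T), porder R -> plane_order R t ->
  ~ exists U (f : sawed_type t -> Q), surj_pmorph_from_upset (sawed_rel R t) RQ U f.
Proof.
move=> m1_max m2_max m12 r0_m1 r0_m2 T R t R_porder t_plane.
case=> U [f [U_upset f_mono f_back f_onto]].
by move/eqP: m12; apply; apply: (maxima_above_root R_porder t_plane U_upset
  f_mono f_back f_onto m1_max m2_max r0_m1 r0_m2).
Qed.

End NoPmorphism.

Lemma fork_no_sawed_pmorph (T : finType) (R : rel T) (t : seq T) :
  porder R -> plane_order R t ->
  ~ exists U (f : sawed_type t -> option 'I_3),
      surj_pmorph_from_upset (sawed_rel R t) fork_rel U f.
Proof.
pose leaf k (hk : k < 3) : option 'I_3 := Some (Ordinal hk).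
apply: (@no_sawed_pmorph _ fork_rel None (leaf 0 erefl) (leaf 1 erefl) (leaf 2 erefl)
  _ _ _ _ _ _ _ _ _ _ _ (leaf 0 erefl) (leaf 1 erefl)) => //.
- by move=> x; rewrite /fork_rel eqxx.
- move=> q p p' q_root _ _; rewrite /fork_rel (negbTE q_root) !orbF.
  by move=> /eqP <- /eqP.
- by apply/forallP; case=> [[[|[|[|]]] ?]|].
- by apply/forallP; case=> [[[|[|[|]]] ?]|].
Qed.

Lemma scott_maximal (x : 'I_4) : maximal scott_rel x -> 2 <= x.
Proof.
case: x => [[|[|k]] hk] // /forallP x_max.
- by have := x_max (@Ordinal 4 1 erefl).
- by have := x_max (@Ordinal 4 2 erefl).
Qed.

Lemma scott_no_sawed_pmorph (T : finType) (R : rel T) (t : seq T) :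
  porder R -> plane_order R t ->
  ~ exists U (f : sawed_type t -> 'I_4),
      surj_pmorph_from_upset (sawed_rel R t) scott_rel U f.
Proof.
pose pt k (hk : k < 4) : 'I_4 := Ordinal hk.
apply: (@no_sawed_pmorph _ scott_rel (pt 0 erefl) (pt 1 erefl) (pt 2 erefl) (pt 3 erefl)
  _ _ _ _ _ _ _ _ _ _ _ (pt 2 erefl) (pt 3 erefl)) => //.
- by move=> x; rewrite /scott_rel eqxx.
- move=> q p p' q_root /scott_maximal p2 /scott_maximal p'2 qp qp'.
  apply: val_inj; move: q_root p2 p'2 qp qp'; rewrite /scott_rel.
  by case: q => [[|[|[|[|q]]]] ?] //; case: p => [[|[|[|[|p]]]] ?] //;
    case: p' => [[|[|[|[|p']]]] ?].
- by apply/forallP; case=> [[|[|[|[|]]]] ?].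
- by apply/forallP; case=> [[|[|[|[|]]]] ?].
Qed.

Theorem lemma7p7 (T : finType) (R : rel T) (t : seq T) (cf cs : form) :
  is_tree R -> 0 < height R ->
  (forall x y, maximal R x -> maximal R y ->
     #|[set z | R z x]| = #|[set z | R z y]|) ->
  plane_order R t ->
  jankov fork_rel cf -> jankov scott_rel cs ->
  forall phi, PL (height (sawed_rel R t)) cf cs phi -> valid (sawed_rel R t) phi.
Proof.
case=> R_porder _ _ _ _ t_plane jankov_fork jankov_scott.
have F_porder := sawed_porder t R_porder.
apply: (PL_sound F_porder (leqnn _)).
- by apply/(jankov_fork _ _ F_porder); apply: fork_no_sawed_pmorph.
- by apply/(jankov_scott _ _ F_porder); apply: scott_no_sawed_pmorph.
Qed.
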